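(* Let $R$ be a unital ring, let $\mathcal{F}_1\subseteq\mathcal{F}_2$ be Gabriel filters of right ideals of $R$, let $\Delta=\{\delta_n\}_{n\in\omega}$ be a higher derivation on $R$, let $M$ be a right $R$-module and $D=\{d_n\}_{n\in\omega}$ a higher $\Delta$-derivation on $M$. For $k=1,2$ let $\{d^{(k)}_n\}_{n\in\omega}$ be the (unique) higher $\Delta$-derivation on $M_{\mathcal{F}_k}$ extending $D$, i.e. with $d^{(k)}_n\circ q_k=q_k\circ d_n$ for all $n$. Then these extensions agree: $q_{12}\circ d^{(1)}_n=d^{(2)}_n\circ q_{12}$ for every $n$.
   Context: A Gabriel filter $\mathcal{F}$ corresponds to a hereditary torsion theory with torsion class $\mathcal{T}=\{N\mid \mathrm{ann}(x)\in\mathcal{F}\ \text{for all } x\in N\}$; $\mathcal{T}(M)$ denotes the largest torsion submodule of $M$. The module of quotients $M_{\mathcal{F}}$ is the largest submodule $N$ of the injective envelope $E(M/\mathcal{T}(M))$ with $N/(M/\mathcal{T}(M))$ torsion, and $q_M:M\to M_{\mathcal{F}}$ is the projection $M\to M/\mathcal{T}(M)$ followed by inclusion. Here $q_k=q_M:M\to M_{\mathcal{F}_k}$, and $q_{12}:M_{\mathcal{F}_1}\to M_{\mathcal{F}_2}$ is the canonical map induced by the inclusion $\mathcal{F}_1\subseteq\mathcal{F}_2$, satisfying $q_{12}q_1=q_2$. A higher derivation on $R$ is a family $\{\delta_n\}$ of additive maps with $\delta_0=\mathrm{id}_R$ and $\delta_n(rs)=\sum_{i=0}^n\delta_i(r)\delta_{n-i}(s)$;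 a higher $\Delta$-derivation on a right module $N$ is a family $\{d_n\}$ of additive maps with $d_0=\mathrm{id}_N$ and $d_n(xr)=\sum_{i=0}^n d_i(x)\delta_{n-i}(r)$. Every higher $\Delta$-derivation on $M$ extends uniquely to a higher $\Delta$-derivation on $M_{\mathcal{F}}$ commuting with $q_M$. *)

(* Right R-modules are modelled as left modules over the
   converse ring R^c, i.e. as [lmodType R^c]; the right action x.r is
   [ract x r := (r : R^c) *: x]. *)
From HB Require Import structures.
From mathcomp Require Import all_boot all_order all_algebra.
Set Implicit Arguments. Unset Strict Implicit. Unset Printing Implicit Defensive.
Import GRing.Theory.
Local Open Scope ring_scope.

Section Defs.
Variable R : pzRingType.

Definition ract (V : lmodType R^c) (x : V) (r : R) : V := (r : R^c) *: x.

Definition right_ideal (I : R -> Prop) : Prop :=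
  [/\ I 0, (forall a b, I a -> I b -> I (a - b)) & (forall a r, I a -> I (a * r))].

Definition colon (I : R -> Prop) (r : R) : R -> Prop := fun s => I (r * s).

(* Gabriel filter (Gabriel topology, Stenstrom VI.5: T1-T4) of right ideals *)
Definition gabriel_filter (F : (R -> Prop) -> Prop) : Prop :=
  (forall I, F I -> right_ideal I) /\
  [/\ F (fun _ => True),
      (forall I J, F I -> right_ideal J -> (forall r, I r -> J r) -> F J),
      (forall I J, F I -> F J -> F (fun r => I r /\ J r)),
      (forall I r, F I -> F (colon I r)) &
      (forall I J, right_ideal I -> F J -> (forall j, J j -> F (colon I j)) -> F I)].

Definition submodule (V : lmodType R^c) (S : V -> Prop) : Prop :=
  [/\ S 0, (forall x y, S x -> S y -> S (x - y)) &
      (forall x r, S x -> S (ract x r))].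

Definition rlinear_on (A B : lmodType R^c) (P : A -> Prop) (f : A -> B) : Prop :=
  (forall x y, P x -> P y -> f (x + y) = f x + f y) /\
  (forall x r, P x -> f (ract x r) = ract (f x) r).

Definition ann (V : lmodType R^c) (x : V) : R -> Prop := fun r => ract x r = 0.

Definition torsion_part (F : (R -> Prop) -> Prop) (V : lmodType R^c) (x : V) : Prop :=
  exists N : V -> Prop, [/\ submodule N, (forall z, N z -> F (ann z)) & N x].

Definition injective_rmod (E : lmodType R^c) : Prop :=
  forall (A : lmodType R^c) (B : A -> Prop) (f : A -> E),
    submodule B -> rlinear_on B f ->
    exists g : A -> E, rlinear_on (fun _ => True) g /\ (forall x, B x -> g x = f x).

(* [q : M -> E] presents E as an injective envelope E(M/T(M)) of M/T(M):
   q is R-linear with kernel exactly T(M) (so q(M) ~ M/T(M)), E is injective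
   and q(M) is an essential submodule of E. *)
Definition quot_envelope (F : (R -> Prop) -> Prop) (M E : lmodType R^c)
    (q : M -> E) : Prop :=
  [/\ rlinear_on (fun _ => True) q,
      (forall x, q x = 0 <-> torsion_part F x),
      injective_rmod E &
      (forall S : E -> Prop, submodule S ->
         (forall y, S y -> (exists x, y = q x) -> y = 0) ->
         forall y, S y -> y = 0)].

(* M_F: the largest submodule N of E with q(M) <= N and N/q(M) F-torsion *)
Definition mod_quot (F : (R -> Prop) -> Prop) (M E : lmodType R^c)
    (q : M -> E) : E -> Prop :=
  fun y => exists N : E -> Prop,
    [/\ submodule N, (forall x, N (q x)),
        (forall z, N z -> F (fun r => exists x, ract z r = q x)) & N y].

Definition higher_derivation (delta : nat -> R -> R) : Prop :=
  [/\ (forall r, delta 0%N r = r),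
      (forall n r s, delta n (r + s) = delta n r + delta n s) &
      (forall n r s, delta n (r * s) =
         \sum_(i < n.+1) delta i r * delta (n - i)%N s)].

(* higher Delta-derivation on the submodule P of V (maps defined on V,
   only their behaviour on P matters) *)
Definition higher_Dderivation (delta : nat -> R -> R) (V : lmodType R^c)
    (P : V -> Prop) (d : nat -> V -> V) : Prop :=
  [/\ (forall x, P x -> d 0%N x = x),
      (forall n x, P x -> P (d n x)),
      (forall n x y, P x -> P y -> d n (x + y) = d n x + d n y) &
      (forall n x r, P x -> d n (ract x r) =
         \sum_(i < n.+1) ract (d i x) (delta (n - i)%N r))].

End Defs.

(* The difference z = q12 (d1_n y) - d2_n (q12 y) of the two extensions is
   R-linear in y once the lower-order extensions agree, and it vanishes on
   q1(M).  Hence ann z contains the F1-dense right ideal {r | y r \in q1(M)},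
   so z is F2-torsion.  But E(M/T_2(M)) is F2-torsion-free: its torsion part
   is a submodule meeting the essential submodule q2(M) ~ M/T_2(M) in zero. *)
From mathcomp Require Import all_boot all_order all_algebra.
Set Implicit Arguments. Unset Strict Implicit. Unset Printing Implicit Defensive.
Import GRing.Theory.
Local Open Scope ring_scope.

Section RightModules.
Variable R : pzRingType.
Implicit Types (V W : lmodType R^c).

Lemma ractA V (x : V) (a b : R) : ract x (a * b) = ract (ract x a) b.
Proof. by rewrite /ract scalerA. Qed.

Lemma ract0 V (x : V) : ract x 0 = 0.
Proof. by rewrite /ract scale0r. Qed.

Lemma ract0r V (r : R) : ract (0 : V) r = 0.
Proof. by rewrite /ract scaler0. Qed.

Lemma ractBl V (x : V) (a b : R) : ract x (a - b) = ract x a - ract x b.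
Proof. by rewrite /ract scalerBl. Qed.

Lemma ractBr V (x y : V) (r : R) : ract (x - y) r = ract x r - ract y r.
Proof. by rewrite /ract scalerBr. Qed.

Lemma ann_right_ideal V (z : V) : right_ideal (ann z).
Proof.
split; rewrite /ann.
- by rewrite ract0.
- by move=> a b ha hb; rewrite ractBl ha hb subrr.
- by move=> a r ha; rewrite ractA ha ract0r.
Qed.

Lemma colon_right_ideal (I : R -> Prop) (r : R) :
  right_ideal I -> right_ideal (colon I r).
Proof.
case=> I0 IB IM; split; rewrite /colon.
- by rewrite mulr0.
- by move=> a b Ia Ib; rewrite mulrBr; apply: IB.
- by move=> a s Ia; rewrite mulrA; apply: IM.
Qed.

Lemma submoduleD V (P : V -> Prop) x y :
  submodule P -> P x -> P y -> P (x + y).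
Proof.
move=> [P0 PB _] Px Py.
by have := PB _ _ Px (PB _ _ P0 Py); rewrite sub0r opprK.
Qed.

Lemma rlinear_on0 V W (P : V -> Prop) (f : V -> W) :
  rlinear_on P f -> P 0 -> f 0 = 0.
Proof.
move=> [fD _] P0; have := fD 0 0 P0 P0; rewrite addr0 => f0.
by apply: (addrI (f 0)); rewrite addr0 -f0.
Qed.

Lemma rlinear_onB V W (P : V -> Prop) (f : V -> W) x y :
  rlinear_on P f -> submodule P -> P x -> P y -> f (x - y) = f x - f y.
Proof.
move=> [fD _] [_ PB _] Px Py.
by have := fD _ _ (PB _ _ Px Py) Py; rewrite subrK => ->; rewrite addrK.
Qed.

Lemma rlinear_on_sum V W (P : V -> Prop) (f : V -> W) (I : Type)
    (s : seq I) (G : I -> V) :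
  rlinear_on P f -> submodule P -> (forall i, P (G i)) ->
  f (\sum_(i <- s) G i) = \sum_(i <- s) f (G i).
Proof.
move=> fP sP PG.
suff [] : P (\sum_(i <- s) G i) /\ f (\sum_(i <- s) G i) = \sum_(i <- s) f (G i)
  by [].
elim/big_rec2: _ => [|i a b _ [Pa fa]].
  by case: (sP) => P0 _ _; split => //; apply: rlinear_on0 fP P0.
by split; [apply: submoduleD | rewrite (proj1 fP) // fa].
Qed.

End RightModules.

Section GabrielFilter.
Variables (R : pzRingType) (F : (R -> Prop) -> Prop).
Hypothesis hF : gabriel_filter F.

Lemma gabriel_filterS I J : F I -> right_ideal J -> (forall r, I r -> J r) -> F J.
Proof. by case: hF => _ [_ FS _ _ _]; apply: FS. Qed.

Lemma torsion_elements_submodule (V : lmodType R^c) :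
  submodule (fun z : V => F (ann z)).
Proof.
case: hF => _ [FT _ FI Fcolon _]; split.
- by apply: (gabriel_filterS FT (ann_right_ideal 0)) => r _; rewrite /ann ract0r.
- move=> x y Fx Fy; apply: (gabriel_filterS (FI _ _ Fx Fy) (ann_right_ideal _)).
  by move=> r [xr yr]; rewrite /ann ractBr xr yr subrr.
- move=> x r Fx; apply: (gabriel_filterS (Fcolon _ r Fx) (ann_right_ideal _)).
  by move=> s; rewrite /colon /ann ractA.
Qed.

Variables (M E : lmodType R^c) (q : M -> E).
Hypothesis q_lin : rlinear_on (fun _ => True) q.

Lemma rlinear0 : q 0 = 0.
Proof. exact: rlinear_on0 q_lin _. Qed.

Lemma rlinearB x y : q (x - y) = q x - q y.
Proof. by apply: (rlinear_onB q_lin). Qed.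

Definition conductor (z : E) : R -> Prop := fun r => exists x, ract z r = q x.

Lemma conductor_right_ideal z : right_ideal (conductor z).
Proof.
split; rewrite /conductor.
- by exists 0; rewrite ract0 rlinear0.
- by move=> a b [x za] [y zb]; exists (x - y); rewrite ractBl za zb rlinearB.
- by move=> a r [x xa]; exists (ract x r); rewrite ractA xa (proj2 q_lin).
Qed.

Lemma dense_conductor_submodule : submodule (fun z => F (conductor z)).
Proof.
case: hF => _ [FT _ FI Fcolon _]; split.
- apply: (gabriel_filterS FT (conductor_right_ideal 0)) => r _.
  by exists 0; rewrite ract0r rlinear0.
- move=> y z Fy Fz; apply: (gabriel_filterS (FI _ _ Fy Fz) (conductor_right_ideal _)).
  by move=> r [[a ya] [b zb]]; exists (a - b); rewrite ractBr ya zb rlinearB.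
- move=> y r Fy; apply: (gabriel_filterS (Fcolon _ r Fy) (conductor_right_ideal _)).
  by move=> s [a ya]; exists a; rewrite -ractA.
Qed.

Lemma mod_quotE y : mod_quot F q y <-> F (conductor y).
Proof.
split; first by case=> N [_ _ NF Ny]; apply: NF.
move=> Fy; exists (fun z => F (conductor z)); split => //.
  exact: dense_conductor_submodule.
move=> x; case: hF => _ [FT _ _ _ _].
apply: (gabriel_filterS FT (conductor_right_ideal _)) => r _.
by exists (ract x r); rewrite (proj2 q_lin).
Qed.

Lemma mod_quot_submodule : submodule (mod_quot F q).
Proof.
case: dense_conductor_submodule => P0 PB PR; split.
- exact/mod_quotE.
- by move=> y z /mod_quotE Fy /mod_quotE Fz; apply/mod_quotE/PB.
- by move=> y r /mod_quotE Fy; apply/mod_quotE/PR.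
Qed.

Hypothesis q_ker : forall x, q x = 0 <-> torsion_part F x.

(* For j in ann (q x), x j is torsion, so (ann x : j) = ann (x j) is dense;
   axiom T4 then makes ann x dense. *)
Lemma torsion_image_eq0 x : F (ann (q x)) -> q x = 0.
Proof.
move=> Fqx; apply/q_ker; exists (fun z => F (ann z)).
split=> //; first exact: torsion_elements_submodule.
case: hF => _ [_ _ _ _ Fglue].
apply: (Fglue _ _ (ann_right_ideal x) Fqx) => j qxj.
have [N [_ NF Nxj]] : torsion_part F (ract x j).
  by apply/q_ker; rewrite (proj2 q_lin) // qxj.
apply: (gabriel_filterS (NF _ Nxj) (colon_right_ideal j (ann_right_ideal x))).
by move=> r; rewrite /colon /ann ractA.
Qed.

End GabrielFilter.

Lemma quot_envelope_torsionfree (R : pzRingType) (F : (R -> Prop) -> Prop)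
    (M E : lmodType R^c) (q : M -> E) (z : E) :
  gabriel_filter F -> quot_envelope F q -> F (ann z) -> z = 0.
Proof.
move=> hF [q_lin q_ker _ q_ess].
apply: (q_ess _ (torsion_elements_submodule hF E)) => w Fw [x wx].
by rewrite wx; apply: (torsion_image_eq0 hF q_lin q_ker); rewrite -wx.
Qed.

Section ExtensionDefect.
Variables (R : pzRingType) (delta : nat -> R -> R).
Hypothesis delta0 : forall r, delta 0%N r = r.
Variables (V W : lmodType R^c) (P : V -> Prop) (Q : W -> Prop) (f : V -> W).
Hypotheses (P_sub : submodule P) (f_lin : rlinear_on P f)
  (f_PQ : forall y, P y -> Q (f y)).
Variables (d1 : nat -> V -> V) (d2 : nat -> W -> W).
Hypotheses (hd1 : higher_Dderivation delta P d1)
  (hd2 : higher_Dderivation delta Q d2).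

Definition extension_defect n y := f (d1 n y) - d2 n (f y).

(* In the Leibniz expansions of both terms the summands of index i < n cancel,
   and delta_0 is the identity in the remaining ones. *)
Lemma extension_defect_ract n y r :
    P y -> (forall i, (i < n)%N -> extension_defect i y = 0) ->
  extension_defect n (ract y r) = ract (extension_defect n y) r.
Proof.
move=> Py lower_eq.
have [_ d1P _ d1R] := hd1; have [_ _ _ d2R] := hd2; have [_ fR] := f_lin.
have [_ _ PR] := P_sub.
rewrite /extension_defect d1R // fR // d2R; last exact: f_PQ.
rewrite (rlinear_on_sum _ f_lin P_sub); last by move=> i; apply/PR/d1P.
rewrite (eq_bigr (fun i : 'I_n.+1 => ract (f (d1 i y)) (delta (n - i)%N r)));
  last by move=> i _; rewrite fR //; apply: d1P.
rewrite !big_ord_recr /= subnn delta0.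
rewrite (eq_bigr (fun i : 'I_n => ract (d2 i (f y)) (delta (n - i)%N r)));
  last by move=> i _; congr ract; apply/eqP; rewrite -subr_eq0; apply/eqP/lower_eq.
by rewrite ractBr opprD addrA (addrC (\sum_(i < n) _)) addrK.
Qed.

End ExtensionDefect.

Theorem corollary4p1 (R : pzRingType)
    (F1 F2 : (R -> Prop) -> Prop)
    (hF1 : gabriel_filter F1) (hF2 : gabriel_filter F2)
    (hF12 : forall I, F1 I -> F2 I)
    (delta : nat -> R -> R) (hdelta : higher_derivation delta)
    (M : lmodType R^c) (d : nat -> M -> M)
    (hd : higher_Dderivation delta (fun _ => True) d)
    (E1 : lmodType R^c) (q1 : M -> E1) (hq1 : quot_envelope F1 q1)
    (E2 : lmodType R^c) (q2 : M -> E2) (hq2 : quot_envelope F2 q2)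
    (q12 : E1 -> E2)
    (hq12_maps : forall y, mod_quot F1 q1 y -> mod_quot F2 q2 (q12 y))
    (hq12_lin : rlinear_on (mod_quot F1 q1) q12)
    (hq12 : forall x, q12 (q1 x) = q2 x)
    (d1 : nat -> E1 -> E1)
    (hd1 : higher_Dderivation delta (mod_quot F1 q1) d1)
    (hd1q : forall n x, d1 n (q1 x) = q1 (d n x))
    (d2 : nat -> E2 -> E2)
    (hd2 : higher_Dderivation delta (mod_quot F2 q2) d2)
    (hd2q : forall n x, d2 n (q2 x) = q2 (d n x)) :
  forall n y, mod_quot F1 q1 y -> q12 (d1 n y) = d2 n (q12 y).
Proof.
have [q1_lin _ _ _] := hq1; have [delta0 _ _] := hdelta.
have defect_ract := extension_defect_ract delta0 (mod_quot_submodule hF1 q1_lin)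
  hq12_lin hq12_maps hd1 hd2.
move=> n; elim/ltn_ind: n => n IH y Fy; apply/eqP; rewrite -subr_eq0; apply/eqP.
apply: (quot_envelope_torsionfree hF2 hq2).
have /hF12 F2y := (mod_quotE hF1 q1_lin y).1 Fy.
apply: (gabriel_filterS hF2 F2y (ann_right_ideal _)) => r [x yx].
rewrite /ann -[_ - _]/(extension_defect q12 d1 d2 n y) -defect_ract //.
  by rewrite yx /extension_defect hd1q !hq12 hd2q subrr.
by move=> i lt_in; rewrite /extension_defect IH // subrr.
Qed.
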